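(* Let $3\le k\le n-1$ and let $T$ be a tree attaining the maximum value of $M_2$ over $\mathcal{CT}_{n,k}$. If the maximum degree of $T$ is $4$, then the subgraph of $T$ induced by the vertices of degree $4$ is a tree.
   Context: A chemical tree is a tree with maximum degree at most $4$. A segment of a tree is a path of positive length neither of whose end vertices has degree $2$ and all of whose internal vertices have degree $2$. $\mathcal{CT}_{n,k}$ is the class of all $n$-vertex chemical trees with exactly $k$ segments. $M_2(G)=\sum_{uv\in E(G)}d_ud_v$, where $d_v$ is the degree of $v$. *)

From mathcomp Require Import all_boot.
Set Implicit Arguments. Unset Strict Implicit. Unset Printing Implicit Defensive.

Definition simple_graph n (e : rel 'I_n) : Prop :=
  irreflexive e /\ symmetric e.

Definition deg n (e : rel 'I_n) (v : 'I_n) : nat := #|[set w | e v w]|.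

(* Edges counted as unordered pairs {x,y}, represented by x < y. *)
Definition edges_in n (e : rel 'I_n) (A : {set 'I_n}) : {set 'I_n * 'I_n} :=
  [set p | [&& p.1 \in A, p.2 \in A, (p.1 < p.2)%N & e p.1 p.2]].

Definition tree_on n (e : rel 'I_n) (A : {set 'I_n}) : Prop :=
  A != set0 /\
  (forall u v, u \in A -> v \in A ->
     connect (fun x y => [&& x \in A, y \in A & e x y]) u v) /\
  #|edges_in e A| = (#|A| - 1)%N.

Definition is_tree n (e : rel 'I_n) : Prop :=
  simple_graph e /\ tree_on e [set: 'I_n].

Definition chemical n (e : rel 'I_n) : Prop := forall v, (deg e v <= 4)%N.

(* A segment joining u and v: a path u = x0, x1, ..., xm = v (m >= 1) with
   distinct vertices, end vertices of degree <> 2, internal vertices of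
   degree 2.  The path is  u :: rcons q v, internal vertices are q. *)
Definition segment_between n (e : rel 'I_n) (u v : 'I_n) : Prop :=
  deg e u != 2 /\ deg e v != 2 /\
  exists q : seq 'I_n,
    [&& path e u (rcons q v), uniq (u :: rcons q v)
      & all (fun w => deg e w == 2) q].

(* Number of segments = k.  In a tree the path between two vertices is
   unique, so segments correspond to unordered pairs {u, v} (u < v). *)
Definition num_segments_eq n (e : rel 'I_n) (k : nat) : Prop :=
  exists S : {set 'I_n * 'I_n},
    (forall u v, (u, v) \in S <-> ((u < v)%N /\ segment_between e u v)) /\
    #|S| = k.

Definition in_CT n (k : nat) (e : rel 'I_n) : Prop :=
  is_tree e /\ chemical e /\ num_segments_eq e k.

Definition M2 n (e : rel 'I_n) : nat :=
  \sum_(p in edges_in e [set: 'I_n]) deg e p.1 * deg e p.2.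

Definition max_deg_vertices n (e : rel 'I_n) (d : nat) : {set 'I_n} :=
  [set v | deg e v == d].

From mathcomp Require Import all_boot zify ring.
From Stdlib Require Import ClassicalEpsilon.
Set Implicit Arguments. Unset Strict Implicit. Unset Printing Implicit Defensive.

(* If the degree-4 vertices of an M2-maximal tree did not induce a connected
   subgraph, the tree path between two of them, prolonged until it leaves the
   degree-4 vertices for good, would contain a subpath a b ... c d with
   deg a = deg c = 4 > deg b, deg d.  Trading the edges ab, cd for ac, bd gives
   a tree with the same degrees, hence in the same class: in a tree every
   vertex of degree <> 2 starts one segment per incident edge, so twice the
   number of segments is the sum of the degrees different from 2.  The trade
   raises M2 by (deg a - deg d) (deg c - deg b) > 0.  Finally a connected
   induced subgraph of a tree is a tree, as a subforest on A has fewer than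
   #|A| edges. *)

Lemma split_first_exit (T : Type) (P : pred T) x s : P x -> ~~ all P (x :: s) ->
  exists s1 y z s2, [/\ x :: s = s1 ++ y :: z :: s2, P y & ~~ P z].
Proof.
elim: s x => [|y s IH] x Px /=; first by rewrite Px.
rewrite Px /=; case: (boolP (P y)) => Py not_all; last by exists [::], x, y, s.
have := IH y Py; rewrite /= Py => /(_ not_all) [s1 [y' [z [s2 [-> Py' Pz]]]]].
by exists (x :: s1), y', z, s2.
Qed.

Lemma path_head_rcons (T : Type) (e : rel T) x q b : path e x (rcons q b) -> e x (head b q).
Proof. by case: q => [|y q] /= /andP[]. Qed.

Lemma head_rcons (T : Type) (x b : T) q : head x (rcons q b) = head b q.
Proof. by case: q. Qed.

Lemma mem_head_rcons (T : eqType) q (b : T) : head b q \in rcons q b.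
Proof. by rewrite headI mem_head. Qed.

Section Graphs.
Variable n : nat.
Implicit Types (g : rel 'I_n) (A B : {set 'I_n}) (x y z u v : 'I_n).

Definition induced g A : rel 'I_n := fun x y => [&& x \in A, y \in A & g x y].

Lemma connect_inducedT g : connect (induced g [set: 'I_n]) =2 connect g.
Proof. by apply: eq_connect => x y; rewrite /induced !in_setT. Qed.

(* [edges_in] represents the edge {x, y} by [upair x y]. *)
Definition upair x y := if (x < y)%N then (x, y) else (y, x).

Lemma upairC x y : upair x y = upair y x.
Proof. by rewrite /upair; case: ltngtP => // /val_inj->. Qed.

Lemma eq_upair u v x y :
  (upair u v == upair x y) = (u == x) && (v == y) || (u == y) && (v == x).
Proof.
rewrite /upair; case: ltngtP => uv; case: ltngtP => xy; rewrite xpair_eqE.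
all: by rewrite -!val_eqE; do !case: eqP => //= ?; lia.
Qed.

Lemma upair_lt x y : (x < y)%N -> upair x y = (x, y).
Proof. by rewrite /upair => ->. Qed.

Lemma upair_ltn x y : x != y -> ((upair x y).1 < (upair x y).2)%N.
Proof. by rewrite /upair -val_eqE; case: (ltngtP x y). Qed.

Lemma upair_mul (f : 'I_n -> nat) x y : f (upair x y).1 * f (upair x y).2 = f x * f y.
Proof. by rewrite /upair; case: ifP => //= _; rewrite mulnC. Qed.

Lemma upair_edges_in g A x y : symmetric g -> x \in A -> y \in A -> x != y ->
  (upair x y \in edges_in g A) = g x y.
Proof.
move=> sg xA yA; rewrite /upair inE; case: ltngtP => [xy|yx|/val_inj->] /=.
- by rewrite xA yA xy.
- by rewrite xA yA yx sg.
- by rewrite eqxx.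
Qed.

Lemma edges_in_subset g B A : B \subset A -> edges_in g B \subset edges_in g A.
Proof.
move=> /subsetP sBA; apply/subsetP => p; rewrite !inE => /and4P[p1B p2B -> ->].
by rewrite !sBA.
Qed.

Lemma path_exit_edge g A B x s : path (induced g A) x s -> x \in B -> last x s \notin B ->
  exists a b, [/\ a \in B, b \notin B, a \in A, b \in A & g a b].
Proof.
elim: s x => [|y s IH] x /=; first by move=> _ ->.
case/andP=> /and3P[xA yA gxy] ps xB lB.
by case: (boolP (y \in B)) => yB; [exact: IH ps yB lB | exists x, y].
Qed.

(* Growing [B] inside a connected [A] one vertex at a time adds at least one
   edge per vertex. *)
Lemma card_edges_in_grow g A B : symmetric g ->
  {in A &, forall u v, connect (induced g A) u v} -> B \subset A -> B != set0 ->
  (#|edges_in g B| + #|A| <= #|edges_in g A| + #|B|)%N.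
Proof.
move=> sg connA; move Dk: (#|A| - #|B|) => k.
elim: k B Dk => [|k IH] B Dk sBA /set0Pn[x Bx].
  have/eqP-> : B == A by rewrite eqEcard sBA; lia.
  by rewrite addnC.
have /subsetPn[y Ay By] : ~~ (A \subset B).
  by apply: contraTN isT => sAB; have := subset_leq_card sAB; lia.
have Ax : x \in A by apply: (subsetP sBA).
case/connectP: (connA x y Ax Ay) => s ps ly.
have := path_exit_edge ps Bx; rewrite -ly => /(_ By) [a [b [Ba Bb Aa Ab gab]]].
have card_bB : #|b |: B| = #|B|.+1 by rewrite cardsU1 Bb.
have Dk' : #|A| - #|b |: B| = k by rewrite card_bB subnS Dk.
have sbBA : b |: B \subset A by rewrite subUset sub1set Ab sBA.
have /(IH _ Dk' sbBA) : b |: B != set0 by apply/set0Pn; exists b; rewrite !inE eqxx.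
have ab : a != b by apply: contraNneq Bb => <-.
have old_edge : upair a b \notin edges_in g B.
  by rewrite /upair; case: ifP; rewrite inE (negbTE Bb) ?andbF.
have new_edge : upair a b \in edges_in g (b |: B).
  by rewrite upair_edges_in // !inE ?eqxx ?Ba ?orbT.
have : edges_in g B \proper edges_in g (b |: B).
  by apply/properP; split; [rewrite edges_in_subset ?subsetUr | exists (upair a b)].
move=> /proper_card lt_E; rewrite card_bB => le_E.
by clear -lt_E le_E; lia.
Qed.

Lemma card_edges_in_connected g A x : symmetric g ->
  {in A &, forall u v, connect (induced g A) u v} -> x \in A ->
  (#|A| <= #|edges_in g A| + 1)%N.
Proof.
move=> sg connA Ax; have := card_edges_in_grow sg connA (B := [set x]).
have x0 : [set x] != set0 by rewrite -card_gt0 cards1.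
rewrite sub1set Ax cards1 => /(_ isT x0); apply: leq_trans; exact: leq_addl.
Qed.

Lemma exists_other_neighbor g x y : (1 < deg g x)%N -> exists2 w, g x w & w != y.
Proof.
rewrite /deg (cardsD1 y) => deg_gt1.
have /card_gt0P[w] : (0 < #|[set w | g x w] :\ y|)%N.
  by move: deg_gt1; case: (_ \in _) => /=; lia.
by rewrite !inE => /andP[wy gxw]; exists w.
Qed.

Definition del_edge g x y : rel 'I_n := fun u v => g u v && (upair u v != upair x y).
Definition add_edge g x y : rel 'I_n := fun u v => g u v || (upair u v == upair x y).

Lemma sub_add_edge g x y : subrel g (add_edge g x y).
Proof. by move=> u v guv; rewrite /add_edge guv. Qed.

Lemma del_edge_sym g x y : symmetric g -> symmetric (del_edge g x y).
Proof. by move=> sg u v; rewrite /del_edge sg upairC. Qed.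

Lemma add_edge_sym g x y : symmetric g -> symmetric (add_edge g x y).
Proof. by move=> sg u v; rewrite /add_edge sg upairC. Qed.

Lemma del_edge_irr g x y : irreflexive g -> irreflexive (del_edge g x y).
Proof. by move=> ig u; rewrite /del_edge ig. Qed.

Lemma add_edge_irr g x y : irreflexive g -> x != y -> irreflexive (add_edge g x y).
Proof.
move=> ig xy u; rewrite /add_edge ig eq_upair /=.
by apply: contraNF xy => /orP[] /andP[/eqP<- /eqP<-].
Qed.

Lemma edges_in_del_edge g x y :
  edges_in (del_edge g x y) [set: 'I_n] = edges_in g [set: 'I_n] :\ upair x y.
Proof.
apply/setP => -[u v]; rewrite !inE /del_edge /=.
by case: (ltnP u v) => [/upair_lt->|] /=; rewrite ?andbF // andbC.
Qed.

Lemma edges_in_add_edge g x y : x != y ->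
  edges_in (add_edge g x y) [set: 'I_n] = upair x y |: edges_in g [set: 'I_n].
Proof.
move=> xy; apply/setP => -[u v]; rewrite !inE /add_edge /=.
case: (ltnP u v) => [/upair_lt->|vu]; first by rewrite orbC.
rewrite /= orbF; apply/esym/negbTE; apply: contraL vu => /eqP uv.
by rewrite -ltnNge; have := upair_ltn xy; rewrite -uv.
Qed.

Lemma sum_edges_del_edge g x y (F : 'I_n * 'I_n -> nat) : symmetric g -> x != y -> g x y ->
  \sum_(p in edges_in g [set: 'I_n]) F p =
  F (upair x y) + \sum_(p in edges_in (del_edge g x y) [set: 'I_n]) F p.
Proof.
move=> sg xy gxy; rewrite edges_in_del_edge (big_setD1 (upair x y)) //.
by rewrite upair_edges_in ?in_setT.
Qed.

Lemma sum_edges_add_edge g x y (F : 'I_n * 'I_n -> nat) : symmetric g -> x != y -> ~~ g x y ->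
  \sum_(p in edges_in (add_edge g x y) [set: 'I_n]) F p =
  F (upair x y) + \sum_(p in edges_in g [set: 'I_n]) F p.
Proof.
move=> sg xy gxy; rewrite edges_in_add_edge // big_setU1 //.
by rewrite upair_edges_in ?in_setT.
Qed.

Lemma deg_del_edge g x y v : symmetric g -> x != y -> g x y ->
  deg (del_edge g x y) v + ((v == x) + (v == y)) = deg g v.
Proof.
move=> sg xy gxy; rewrite /deg.
have delE u w :
    del_edge g x y u w = ~~ ((u == x) && (w == y) || (u == y) && (w == x)) && g u w.
  by rewrite /del_edge eq_upair andbC.
case: (v =P x) => [->|/eqP vx]; last case: (v =P y) => [->|/eqP vy].
- have -> : [set w | del_edge g x y x w] = [set w | g x w] :\ y.
    by apply/setP => w; rewrite !inE delE eqxx (negbTE xy) /= orbF.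
  by rewrite (cardsD1 y [set w | g x w]) inE gxy (negbTE xy) addnC.
- have -> : [set w | del_edge g x y y w] = [set w | g y w] :\ x.
    by apply/setP => w; rewrite !inE delE eqxx eq_sym (negbTE xy).
  by rewrite (cardsD1 x [set w | g y w]) inE sg gxy addnC.
- have -> : [set w | del_edge g x y v w] = [set w | g v w].
    by apply/setP => w; rewrite !inE delE (negbTE vx) (negbTE vy).
  by rewrite addn0.
Qed.

Lemma deg_add_edge g x y v : symmetric g -> x != y -> ~~ g x y ->
  deg (add_edge g x y) v = deg g v + ((v == x) + (v == y)).
Proof.
move=> sg xy gxy; rewrite /deg.
have addE u w : add_edge g x y u w = ((u == x) && (w == y) || (u == y) && (w == x)) || g u w.
  by rewrite /add_edge eq_upair orbC.
case: (v =P x) => [->|/eqP vx]; last case: (v =P y) => [->|/eqP vy].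
- have -> : [set w | add_edge g x y x w] = y |: [set w | g x w].
    by apply/setP => w; rewrite !inE addE eqxx (negbTE xy) /= orbF.
  by rewrite cardsU1 inE (negbTE gxy) (negbTE xy) addnC.
- have -> : [set w | add_edge g x y y w] = x |: [set w | g y w].
    by apply/setP => w; rewrite !inE addE eqxx eq_sym (negbTE xy).
  by rewrite cardsU1 inE sg (negbTE gxy) addnC.
- have -> : [set w | add_edge g x y v w] = [set w | g v w].
    by apply/setP => w; rewrite !inE addE (negbTE vx) (negbTE vy).
  by rewrite addn0.
Qed.

Lemma path_del_edge g x z y s : path g y s -> (x \notin y :: s) || (z \notin y :: s) ->
  path (del_edge g x z) y s.
Proof.
have avoid w : w \notin y :: s -> all (predC (pred1 w)) (y :: s).
  by rewrite all_predC has_pred1.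
move=> p /orP[/avoid out | /avoid out]; apply: sub_in_path out p => u v.
all: rewrite !inE => /negPf ux /negPf vx guv.
all: by rewrite /del_edge guv eq_upair ux vx ?andbF.
Qed.

End Graphs.

Section Tree.
Variables (n : nat) (g : rel 'I_n).
Hypothesis tree_g : is_tree g.

Lemma tree_sym : symmetric g. Proof. by case: tree_g => -[]. Qed.
Lemma tree_irr : irreflexive g. Proof. by case: tree_g => -[]. Qed.

Lemma tree_connect u v : connect g u v.
Proof.
by case: tree_g => _ [_ [/(_ u v) + _]]; rewrite !in_setT connect_inducedT => /(_ isT isT).
Qed.

Lemma tree_card_edges : #|edges_in g [set: 'I_n]| = n.-1.
Proof. by case: tree_g => _ [_ [_ ->]]; rewrite cardsT card_ord subn1. Qed.

Lemma tree_card_edges_in_lt B : B != set0 -> (#|edges_in g B| < #|B|)%N.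
Proof.
move=> B0; have /set0Pn[x _] := B0.
have connT : {in [set: 'I_n] &, forall u v, connect (induced g [set: 'I_n]) u v}.
  by move=> u v _ _; rewrite connect_inducedT tree_connect.
have := card_edges_in_grow tree_sym connT (subsetT B) B0.
by rewrite tree_card_edges cardsT card_ord; have := ltn_ord x; lia.
Qed.

Lemma tree_cut_edge x y : g x y -> ~~ connect (del_edge g x y) x y.
Proof.
move=> gxy; apply/negP => cxy.
have xy : x != y by apply: contraTneq gxy => ->; rewrite tree_irr.
have sym_del := del_edge_sym x y tree_sym.
have connT : {in [set: 'I_n] &, forall u v,
    connect (induced (del_edge g x y) [set: 'I_n]) u v}.
  move=> u v _ _; rewrite connect_inducedT.
  apply: connect_sub (tree_connect u v) => {}u {}v guv.
  case: (boolP (upair u v == upair x y)) => [|uv].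
    by rewrite eq_upair => /orP[] /andP[/eqP-> /eqP->] //; rewrite (sym_connect_sym sym_del).
  by apply: connect1; rewrite /del_edge guv.
have := card_edges_in_connected sym_del connT (in_setT x).
have := sum_edges_del_edge (fun=> 1) tree_sym xy gxy.
rewrite !sum1_card cardsT card_ord tree_card_edges; have := ltn_ord x; lia.
Qed.

Lemma tree_path_chordless x s : path g x s -> uniq (x :: s) -> (1 < size s)%N ->
  ~~ g x (last x s).
Proof.
case: s => [|v s] //; case/lastP: s => [|t y] //= /andP[gxv pv].
rewrite last_rcons => /andP[x_out /andP[v_out _]] _; apply/negP => gxy.
apply: (negP (tree_cut_edge gxy)); apply/connectP.
exists (v :: rcons t y); last by rewrite /= last_rcons.
rewrite /= {1}/del_edge gxv eq_upair eqxx path_del_edge ?x_out // andbT /=.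
move: x_out v_out; rewrite !inE !mem_rcons !inE !negb_or => /andP[_ /andP[xy _]] /andP[vy _].
by rewrite (negbTE vy) (negbTE xy).
Qed.

Lemma tree_path_head_uniq a s s' : path g a s -> a \notin s -> path g a s' -> a \notin s' ->
  last a s = last a s' -> head a s = head a s'.
Proof.
case: s => [|c s]; case: s' => [|c' s'] //=.
- by move=> _ _ _ + eq_a; rewrite eq_a mem_last.
- by move=> _ + _ _ eq_a; rewrite -eq_a mem_last.
move=> /andP[gac pc] a_out /andP[gac' pc'] a_out' eq_last.
apply/eqP; apply: contraTT (tree_cut_edge gac) => cc'; rewrite negbK.
have ac : a != c by apply: contraNneq a_out => ->; rewrite mem_head.
have sym_del := sym_connect_sym (del_edge_sym a c tree_sym).
apply: (@connect_trans _ _ c').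
  by apply: connect1; rewrite /del_edge gac' eq_upair eqxx (negbTE ac) eq_sym (negbTE cc').
apply: (@connect_trans _ _ (last c s)).
  by rewrite eq_last; apply/connectP; exists s' => //; apply: path_del_edge; rewrite ?a_out'.
by rewrite sym_del; apply/connectP; exists s => //; apply: path_del_edge; rewrite ?a_out.
Qed.

Lemma tree_path_fresh a q x w : path g a (rcons q x) -> uniq (a :: rcons q x) ->
  g x w -> w != last a q -> w \notin a :: rcons q x.
Proof.
move=> p u gxw w_last; rewrite -rcons_cons mem_rcons inE negb_or.
have -> /= : w != x by apply: contraTneq gxw => ->; rewrite tree_irr.
apply/negP => w_in.
have [s1 [s2 Eq]] : exists s1 s2, a :: q = s1 ++ w :: s2.
  by case/splitPr: w_in => s1 s2; exists s1, s2.
have s2_nil : s2 != [::].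
  apply: contraNneq w_last => s2_0.
  by move: (congr1 (last a) Eq); rewrite s2_0 last_cat /= => ->.
have Ep : a :: rcons q x = s1 ++ w :: rcons s2 x by rewrite -rcons_cons Eq rcons_cat.
have /cat_sorted2[_ pw] : sorted g (s1 ++ w :: rcons s2 x) by rewrite -Ep.
have : uniq (s1 ++ w :: rcons s2 x) by rewrite -Ep.
rewrite cat_uniq => /and3P[_ _ uw].
have := tree_path_chordless pw uw; rewrite last_rcons tree_sym gxw size_rcons.
by rewrite ltnS lt0n size_eq0 s2_nil => /(_ isT).
Qed.

Lemma tree_extend_path (P : pred 'I_n) a q x :
  (forall v, P v -> 1 < deg g v)%N -> path g a (rcons q x) -> uniq (a :: rcons q x) ->
  exists s, [/\ path g a (rcons q x ++ s), uniq (a :: rcons q x ++ s),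
    all P (belast x s) & ~~ P (last x s)].
Proof.
move=> Pdeg; move Dk: (n - size q) => k.
elim: k q x Dk => [|k IH] q x Dk p u.
all: case Px: (P x); last by exists [::]; rewrite !cats0 Px.
  move: (max_card (mem (a :: rcons q x))); rewrite card_ord (card_uniqP u) /= size_rcons.
  by lia.
have [w gxw w_last] := exists_other_neighbor (last a q) (Pdeg x Px).
have w_out := tree_path_fresh p u gxw w_last.
have Dk' : n - size (rcons q x) = k by rewrite size_rcons; lia.
have p' : path g a (rcons (rcons q x) w) by rewrite rcons_path p last_rcons.
have u' : uniq (a :: rcons (rcons q x) w) by rewrite -rcons_cons rcons_uniq w_out.
have [s [ps us Ps Pl]] := IH _ _ Dk' p' u'.
by exists (w :: s); rewrite -cat_rcons /= Px.
Qed.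

End Tree.

Section Segments.
Variables (n : nat) (g : rel 'I_n).
Implicit Types (a b c v x y z : 'I_n) (q : seq 'I_n).

Definition segpath a q b :=
  [&& path g a (rcons q b), uniq (a :: rcons q b) & all (fun w => deg g w == 2) q].

Lemma deg2_neighbor_eq v x y z : deg g v = 2 -> g v x -> g v y -> g v z ->
  x != z -> y != z -> x = y.
Proof.
move=> dv gvx gvy gvz xz yz; apply/eqP/negPn/negP => xy.
have : (#|z |: [set x; y]| <= deg g v)%N.
  by apply/subset_leq_card/subsetP => w; rewrite !inE => /orP[|/orP[]] /eqP->.
by rewrite dv cardsU1 cards2 !inE negb_or !(eq_sym z) xz yz xy.
Qed.

Lemma segpath_end a q b q' b' : symmetric g ->
  segpath a q b -> deg g b != 2 -> segpath a q' b' -> deg g b' != 2 ->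
  head b q = head b' q' -> b = b'.
Proof.
move=> sg; elim: q a q' => [|c q IH] a [|c' q'] /and3P[p u d] db /and3P[p' u' d'] db' //= hh.
- by move: d' db => /= /andP[/eqP <- _]; rewrite hh eqxx.
- by move: d db' => /= /andP[/eqP <- _]; rewrite hh eqxx.
move: hh p p' u u' d d' => <- /= /andP[gac pc] /andP[_ pc'] /andP[a_out u] /andP[a_out' u'].
move=> /andP[/eqP dc d] /andP[_ d']; apply: (IH c q') => //; try exact/and3P.
have gca : g c a by rewrite sg.
apply: (deg2_neighbor_eq dc (path_head_rcons pc) (path_head_rcons pc') gca).
- by apply: contraNneq a_out => <-; rewrite in_cons mem_head_rcons orbT.
- by apply: contraNneq a_out' => <-; rewrite in_cons mem_head_rcons orbT.
Qed.

Definition segmentb a b : bool :=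
  if excluded_middle_informative (segment_between g a b) then true else false.

Lemma segmentbP a b : reflect (segment_between g a b) (segmentb a b).
Proof. by rewrite /segmentb; case: excluded_middle_informative => h; constructor. Qed.

Definition segment_interior a b : seq 'I_n :=
  epsilon (inhabits [::]) (fun q => segpath a q b).

Lemma segment_interiorP a b : segment_between g a b -> segpath a (segment_interior a b) b.
Proof. by case=> _ [_ ex]; apply: (epsilon_spec (inhabits [::]) (fun q => segpath a q b)). Qed.

Lemma segment_between_sym a b : symmetric g -> segment_between g a b -> segment_between g b a.
Proof.
move=> sg [da [db [q /and3P[p u d]]]]; split=> //; split=> //; exists (rev q).
have -> : rcons (rev q) a = rev (a :: q) by rewrite rev_cons.
rewrite -rev_rcons rev_uniq u all_rev d !andbT.
have := rev_path g a (rcons q b); rewrite last_rcons belast_rcons => ->.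
by rewrite (@eq_path _ _ g) // => x y; apply: sg.
Qed.

Lemma segment_between_irr a : ~ segment_between g a a.
Proof. by case=> _ [_ [q /and3P[_ /andP[] + _ _]]]; rewrite mem_rcons mem_head. Qed.

Definition segments := [set p : 'I_n * 'I_n | segmentb p.1 p.2].
Definition darts := [set p : 'I_n * 'I_n | g p.1 p.2 && (deg g p.1 != 2)].

Lemma card_darts : #|darts| = \sum_(v | deg g v != 2) deg g v.
Proof.
rewrite /darts -sum1dep_card (eq_bigl (fun p => (deg g p.1 != 2) && g p.1 p.2)).
  rewrite -(pair_big_dep (fun v => deg g v != 2) (fun v w => g v w) (fun _ _ => 1)).
  by apply: eq_bigr => v _; rewrite sum1dep_card.
by move=> p; rewrite andbC.
Qed.

Lemma segmentbC a b : symmetric g -> segmentb a b = segmentb b a.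
Proof. by move=> sg; apply/segmentbP/segmentbP; apply: segment_between_sym. Qed.

Lemma card_segments_sorted : symmetric g ->
  #|segments| = (2 * #|[set p in segments | (p.1 < p.2)%N]|)%N.
Proof.
move=> sg; set U := [set p in segments | _].
have flipK : involutive (fun p : 'I_n * 'I_n => (p.2, p.1)) by case.
have UD : segments :\: U = (fun p => (p.2, p.1)) @^-1: U.
  apply/setP => -[a b]; rewrite !inE /= (segmentbC a b sg).
  case: (segmentbP b a) => [ba|] //=; rewrite andbT.
  have ba_ne : (b : nat) <> a.
    by move=> /val_inj eq_ba; rewrite eq_ba in ba; apply: segment_between_irr ba.
  by apply/idP/idP; lia.
have sUS : U \subset segments by apply/subsetP => p; rewrite inE => /andP[].
rewrite -(cardsID U segments) (setIidPr sUS) UD card_preimset ?mul2n ?addnn //.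
exact: can_inj flipK.
Qed.

Hypothesis tree_g : is_tree g.

Lemma segpath_of_dart a c : g a c ->
  exists q b, [/\ segpath a q b, deg g b != 2 & head b q = c].
Proof.
move=> gac; have ac : a != c by apply: contraTneq gac => ->; rewrite (tree_irr tree_g).
have deg2 v : deg g v == 2 -> (1 < deg g v)%N by move/eqP->.
have pac : path g a (rcons [::] c) by rewrite /= gac.
have uac : uniq (a :: rcons [::] c) by rewrite /= inE ac.
have [s [p u d l]] := tree_extend_path tree_g deg2 pac uac.
exists (belast c s), (last c s); rewrite /segpath -lastI p u d.
by split=> //; case: s {p u d l}.
Qed.

Lemma segpath_head a q b q' : segpath a q b -> segpath a q' b -> head b q = head b q'.
Proof.
move=> /and3P[p /andP[a_out _] _] /and3P[p' /andP[a_out' _] _].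
by have := tree_path_head_uniq tree_g p a_out p' a_out'; rewrite !last_rcons !head_rcons => ->.
Qed.

Lemma card_segments : #|segments| = #|darts|.
Proof.
pose first_dart p := (p.1, head p.2 (segment_interior p.1 p.2)).
have first_dart_inj : {in segments &, injective first_dart}.
  move=> -[a b] [a' b'] /[!inE] /= /segmentbP ab /segmentbP ab' [eq_a eq_head].
  subst a'; have [_ [db _]] := ab; have [_ [db' _]] := ab'; congr pair.
  exact: segpath_end (tree_sym tree_g) (segment_interiorP ab) db
    (segment_interiorP ab') db' eq_head.
rewrite -(card_in_imset first_dart_inj); suff -> : first_dart @: segments = darts by [].
apply/setP => -[a c].
apply/imsetP/idP => [[[a' b] /[!inE] /= /segmentbP ab [-> ->]] | /[!inE] /= /andP[gac da]].
  have [da _] := ab; have /and3P[p _ _] := segment_interiorP ab.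
  by rewrite /= (path_head_rcons p) da.
have [q [b [sq db <-]]] := segpath_of_dart gac.
have ab : segment_between g a b by split=> //; split=> //; exists q.
exists (a, b); first by rewrite inE; apply/segmentbP.
by rewrite /first_dart /= (segpath_head (segment_interiorP ab) sq).
Qed.

Lemma tree_num_segments k :
  num_segments_eq g k <-> (2 * k = \sum_(v | deg g v != 2) deg g v)%N.
Proof.
rewrite -card_darts -card_segments (card_segments_sorted (tree_sym tree_g)).
set U := [set p in segments | _].
have memU u v : (u, v) \in U <-> (u < v)%N /\ segment_between g u v.
  by rewrite !inE andbC; split => [/andP[? /segmentbP]|[-> /segmentbP]].
split => [[S [memS <-]] | eq_k].
  suff -> : S = U by [].
  apply/setP => -[u v]; have [S_seg seg_S] := memS u v; have [U_seg seg_U] := memU u v.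
  by apply/idP/idP => [/S_seg/seg_U | /U_seg/seg_S].
by exists U; split => //; apply/eqP; rewrite -(eqn_pmul2l (isT : 0 < 2)%N) eq_k.
Qed.

End Segments.

Section Swap.
Variables (n : nat) (e : rel 'I_n) (a b c d : 'I_n) (m : seq 'I_n).
Hypothesis tree_e : is_tree e.
Hypothesis path_abcd : path e a (b :: m ++ [:: c; d]).
Hypothesis uniq_abcd : uniq (a :: b :: m ++ [:: c; d]).

Lemma swap_distinct : [/\ a != b, a != c, b != c, b != d & c != d].
Proof.
move: uniq_abcd; rewrite /= !(mem_cat, inE) cat_uniq /= !inE !negb_or.
by case/and5P => /andP[-> /and3P[_ -> _]] /and3P[_ -> ->] _ _ /andP[-> _].
Qed.

Lemma swap_edges : e a b /\ e c d.
Proof. by move: path_abcd => /= /andP[-> ]; rewrite cat_path => /andP[_ /and3P[_ -> _]]. Qed.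

Lemma swap_prefix :
  [/\ path e a (b :: m ++ [:: c]), uniq (a :: b :: m ++ [:: c]) & d \notin b :: m ++ [:: c]].
Proof.
have E : a :: b :: m ++ [:: c; d] = (a :: b :: m ++ [:: c]) ++ [:: d] by rewrite /= -catA.
have /cat_sorted2[p _] : sorted e ((a :: b :: m ++ [:: c]) ++ [:: d]) by rewrite -E.
have : uniq ((a :: b :: m ++ [:: c]) ++ [:: d]) by rewrite -E.
rewrite cat_uniq /= orbF => /and3P[u d_out _]; split=> //.
by move: d_out; rewrite in_cons negb_or => /andP[].
Qed.

Lemma swap_nonadjacent : ~~ e a c /\ ~~ e b d.
Proof.
have [p_ac u_ac _] := swap_prefix.
move: path_abcd uniq_abcd => /= /andP[_ p_bd] /andP[_ u_bd].
split.
- have := tree_path_chordless tree_e p_ac u_ac; rewrite /= last_cat size_cat addn1.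
  by apply.
- have := tree_path_chordless tree_e p_bd u_bd; rewrite last_cat size_cat addn2.
  by apply.
Qed.

Definition swap_graph := add_edge (add_edge (del_edge (del_edge e a b) c d) a c) b d.

Lemma swap_graph_sym : symmetric swap_graph.
Proof. by apply/add_edge_sym/add_edge_sym/del_edge_sym/del_edge_sym; apply: tree_sym. Qed.

Lemma swap_steps : [/\ del_edge e a b c d, ~~ del_edge (del_edge e a b) c d a c
  & ~~ add_edge (del_edge (del_edge e a b) c d) a c b d].
Proof.
have [ab ac bc bd cd] := swap_distinct; have [nac nbd] := swap_nonadjacent.
have [_ ecd] := swap_edges.
split.
- by rewrite /del_edge ecd eq_upair !(eq_sym c) (negbTE ac) (negbTE bc).
- by rewrite /del_edge (negbTE nac).
- by rewrite /add_edge /del_edge (negbTE nbd) /= eq_upair (eq_sym b a) (negbTE ab) (negbTE bc).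
Qed.

Lemma deg_swap_graph v : deg swap_graph v = deg e v.
Proof.
have [ab ac bc bd cd] := swap_distinct; have [eab _] := swap_edges.
have [g1cd ng2ac ng3bd] := swap_steps.
have sym1 := del_edge_sym a b (tree_sym tree_e); have sym2 := del_edge_sym c d sym1.
rewrite /swap_graph (deg_add_edge v (add_edge_sym a c sym2) bd ng3bd).
rewrite (deg_add_edge v sym2 ac ng2ac) -(deg_del_edge v (tree_sym tree_e) ab eab).
by rewrite -(deg_del_edge v sym1 cd g1cd); ring.
Qed.

Lemma sum_edges_swap_graph (F : 'I_n * 'I_n -> nat) :
  \sum_(p in edges_in swap_graph [set: 'I_n]) F p + F (upair a b) + F (upair c d) =
  \sum_(p in edges_in e [set: 'I_n]) F p + F (upair a c) + F (upair b d).
Proof.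
have [ab ac bc bd cd] := swap_distinct; have [eab _] := swap_edges.
have [g1cd ng2ac ng3bd] := swap_steps.
have sym1 := del_edge_sym a b (tree_sym tree_e); have sym2 := del_edge_sym c d sym1.
rewrite /swap_graph (sum_edges_add_edge F (add_edge_sym a c sym2) bd ng3bd).
rewrite (sum_edges_add_edge F sym2 ac ng2ac) (sum_edges_del_edge F (tree_sym tree_e) ab eab).
by rewrite (sum_edges_del_edge F sym1 cd g1cd); ring.
Qed.

Lemma M2_swap_graph :
  M2 swap_graph + deg e a * deg e b + deg e c * deg e d =
  M2 e + deg e a * deg e c + deg e b * deg e d.
Proof.
have := sum_edges_swap_graph (fun p => deg e p.1 * deg e p.2); rewrite !upair_mul => <-.
by congr (_ + _ + _); apply: eq_bigr => p _; rewrite !deg_swap_graph.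
Qed.

Lemma swap_graph_connect u v : connect swap_graph u v.
Proof.
have [ab ac bc bd cd] := swap_distinct; have [eab ecd] := swap_edges.
have [p_ac u_ac d_out] := swap_prefix.
have sym_swap := sym_connect_sym swap_graph_sym.
have old_edge x y : del_edge (del_edge e a b) c d x y -> swap_graph x y.
  by move=> h; apply/sub_add_edge/sub_add_edge.
have bc_conn : connect swap_graph b c.
  apply/connectP; exists (m ++ [:: c]); last by rewrite last_cat.
  apply: sub_path old_edge _ _ _; apply: path_del_edge; last by rewrite d_out orbT.
  apply: path_del_edge; first by move: p_ac => /andP[].
  by move: u_ac => /andP[-> _].
have ac_conn : connect swap_graph a c.
  by apply: connect1; rewrite /swap_graph /add_edge eqxx !orbT.
have bd_conn : connect swap_graph b d.
  by apply: connect1; rewrite /swap_graph /add_edge eqxx orbT.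
have ab_conn : connect swap_graph a b by apply: (connect_trans ac_conn); rewrite sym_swap.
have cd_conn : connect swap_graph c d by apply: (connect_trans _ bd_conn); rewrite sym_swap.
apply: connect_sub (tree_connect tree_e u v) => {u v} x y exy.
case: (boolP (upair x y == upair a b)) => [|xy_ab].
  by rewrite eq_upair => /orP[] /andP[/eqP-> /eqP->]; rewrite // sym_swap.
case: (boolP (upair x y == upair c d)) => [|xy_cd].
  by rewrite eq_upair => /orP[] /andP[/eqP-> /eqP->]; rewrite // sym_swap.
by apply/connect1/old_edge; rewrite /del_edge exy xy_ab xy_cd.
Qed.

Lemma swap_graph_tree : is_tree swap_graph.
Proof.
have [ab ac bc bd cd] := swap_distinct.
split; first split.
- apply: add_edge_irr bd; apply: add_edge_irr ac; apply/del_edge_irr/del_edge_irr.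
  exact: tree_irr tree_e.
- exact: swap_graph_sym.
split; first by apply/set0Pn; exists a.
split; first by move=> u v _ _; rewrite connect_inducedT swap_graph_connect.
have [_ [_ <-]] := tree_e.2.
have := sum_edges_swap_graph (fun=> 1); rewrite !sum1_card; lia.
Qed.

Lemma in_CT_swap_graph k : chemical e -> num_segments_eq e k -> in_CT k swap_graph.
Proof.
move=> chem_e seg_e; split; first exact: swap_graph_tree.
split; first by move=> v; rewrite deg_swap_graph.
apply/(tree_num_segments swap_graph_tree); move/(tree_num_segments tree_e): seg_e => ->.
by apply: eq_big => v; rewrite deg_swap_graph.
Qed.

End Swap.

Lemma max_M2_no_swap_path n k (e : rel 'I_n) a b c d m :
  in_CT k e -> (forall e' : rel 'I_n, in_CT k e' -> (M2 e' <= M2 e)%N) ->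
  path e a (b :: m ++ [:: c; d]) -> uniq (a :: b :: m ++ [:: c; d]) ->
  (deg e d < deg e a)%N -> (deg e b < deg e c)%N -> False.
Proof.
move=> [tree_e [chem_e seg_e]] max_e p u da bc.
have le_M2 := max_e _ (in_CT_swap_graph tree_e p u chem_e seg_e).
have eq_M2 := M2_swap_graph tree_e p u.
by clear -le_M2 eq_M2 da bc; nia.
Qed.

Lemma max_M2_deg4_connected n k (e : rel 'I_n) :
  in_CT k e -> (forall e' : rel 'I_n, in_CT k e' -> (M2 e' <= M2 e)%N) ->
  {in max_deg_vertices e 4 &, forall u w, connect (induced e (max_deg_vertices e 4)) u w}.
Proof.
move=> ct max_e u w uA; set A := max_deg_vertices e 4 in uA *.
have [tree_e [chem_e _]] := ct.
pose inA := [pred x | x \in A].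
have A_deg4 v : v \in A -> deg e v = 4 by rewrite inE => /eqP.
have notA_deg v : v \notin A -> (deg e v < 4)%N by rewrite inE ltn_neqAle chem_e andbT.
case/connectP: (tree_connect tree_e u w) => s0 ps0 ->; case: (shortenP ps0) => s ps us _ wA.
case: (boolP (all inA (u :: s))) => [allA | notA].
  apply/connectP; exists s => //; apply: sub_in_path allA ps => x y xA yA exy.
  by rewrite /induced xA yA exy.
exfalso; case/lastP: s ps us wA notA => [|q w'] ps us; first by rewrite /= uA.
rewrite last_rcons => wA notA.
have notA' : ~~ all inA (u :: q) by move: notA; rewrite -rcons_cons all_rcons /= wA.
have [s1 [a [b [s2 [Eab aA bA]]]]] := split_first_exit (P := inA) uA notA'.
have inA_deg v : inA v -> (1 < deg e v)%N by move/A_deg4->.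
have [t [pt ut _ tA]] := tree_extend_path tree_e inA_deg ps us.
have notAt : ~~ all inA (w' :: t) by apply: contra tA => /allP; apply; exact: mem_last.
have [s4 [c [d [s5 [Ecd cA dA]]]]] := split_first_exit (P := inA) wA notAt.
have EL : u :: rcons q w' ++ t = s1 ++ (a :: b :: (s2 ++ s4) ++ [:: c; d]) ++ s5.
  by rewrite cat_rcons -[u :: q ++ _]/((u :: q) ++ _) Eab Ecd -!catA /= -!catA.
have /cat_sorted2[_ /cat_sorted2[p _]] :
  sorted e (s1 ++ (a :: b :: (s2 ++ s4) ++ [:: c; d]) ++ s5) by rewrite -EL.
have : uniq (s1 ++ (a :: b :: (s2 ++ s4) ++ [:: c; d]) ++ s5) by rewrite -EL.
rewrite cat_uniq => /and3P[_ _]; rewrite cat_uniq => /and3P[u_abcd _ _].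
apply: (max_M2_no_swap_path ct max_e p u_abcd).
- by rewrite (A_deg4 a aA) notA_deg.
- by rewrite (A_deg4 c cA) notA_deg.
Qed.

Theorem corollary1 (n k : nat) (e : rel 'I_n) :
  (3 <= k)%N -> (k <= n - 1)%N ->
  in_CT k e ->
  (forall e' : rel 'I_n, in_CT k e' -> (M2 e' <= M2 e)%N) ->
  (exists v, deg e v = 4) ->
  tree_on e (max_deg_vertices e 4).
Proof.
(* The bounds on [k] only make the class nonempty; the argument does not use them. *)
move=> _ _ ct max_e [v0 deg_v0].
have [[[_ sym_e] tree_e] _] := ct.
have A_v0 : v0 \in max_deg_vertices e 4 by rewrite inE deg_v0.
have A0 : max_deg_vertices e 4 != set0 by apply/set0Pn; exists v0.
have connA := max_M2_deg4_connected ct max_e.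
split=> //; split=> //.
have := card_edges_in_connected sym_e connA A_v0.
have := tree_card_edges_in_lt ct.1 A0.
lia.
Qed.
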